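(* Let $\mathcal S=\{s_1,\dots,s_k\}\subseteq\Sigma^n$. Let $s^*_H$ be the lexicographically minimal string among all strings $t\in\Sigma^n$ minimizing $\sum_{j}\partial_{Ham}(s_j,t)$, and let $s^*_{SH}$ be the lexicographically minimal string among all strings $t\in\Sigma^n$ minimizing $\sum_j\partial_{SH}(s_j,t)$. Then for every $i\in[1..n]$ with $s^*_{SH}[i]\ne s^*_H[i]$, we have $SW(\mathcal S,s^*_{SH},i-1)\ne\emptyset$ or $SW(\mathcal S,s^*_{SH},i)\ne\emptyset$.
   Context: The swap at position $p$ exchanges the letters at $p,p+1$; a swap permutation is a set of swaps at positions pairwise differing by at least $2$; equal-length strings are matching if a swap permutation transforms one into the other. Swap distance $\partial_S(u,v)$: $+\infty$ if not matching, else the number of swaps in the unique swap permutation from $u$ to $v$ never swapping identical letters. Swap+Hamming distance $\partial_{SH}(u,v)=\min_t\big(\partial_S(u,v')\ldots\big)$, precisely $\partial_{SH}(u,v)=\min_{t}\big(\partial_S(u,t)+\partial_{Ham}(t,v)\big)$. Greedy swaps: for strings $t,s$ of equal length, scanning $i=1,2,\dots$ left to right, a swap is counted at position $i$ iff $t[i]\ne t[i+1]$, $t[i]=s[i+1]$, $t[i+1]=s[i]$, and no swap was counted at position $i-1$ (this greedy procedure realizes $\partial_{SH}$). For a string $t$ and position $i$, $SW(\mathcal S,t,i)$ is the set of indices $j\in[1..k]$ such that the greedy procedure applied to $(t,s_j)$ counts a swap at position $i$ (with $SW(\mathcal S,t,0)=\emptyset$). *)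

(* Strings of length n over a finite totally ordered
   alphabet T are n.-tuples; positions are 0-based ('I_n). *)
From mathcomp Require Import all_boot all_order.
Set Implicit Arguments. Unset Strict Implicit. Unset Printing Implicit Defensive.
Import Order.TTheory.

Section StringDefs.
Context {d : Order.disp_t} {T : finOrderType d} {n : nat}.

Definition ham (u v : n.-tuple T) : nat := #|[set i : 'I_n | tnth u i != tnth v i]|.

(* A swap permutation: a set P of positions p (0-based; swap at p exchanges
   letters at p and p+1, so p+1 < n), pairwise differing by at least 2. *)
Definition swap_perm (P : {set 'I_n}) : bool :=
  [forall p in P, (val p).+1 < n] &&
  [forall p in P, forall q in P, (p != q) ==> ((val p).+2 <= val q) || ((val q).+2 <= val p)].

Definition swap_partner (P : {set 'I_n}) (i : 'I_n) : 'I_n :=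
  odflt i [pick j : 'I_n | ((i \in P) && (val j == (val i).+1))
                         || ((j \in P) && ((val j).+1 == val i))].

Definition apply_swaps (P : {set 'I_n}) (u : n.-tuple T) : n.-tuple T :=
  [tuple tnth u (swap_partner P i) | i < n].

Definition no_identical (P : {set 'I_n}) (u : n.-tuple T) : bool :=
  [forall p in P, forall q : 'I_n, (val q == (val p).+1) ==> (tnth u p != tnth u q)].

Definition matching (u v : n.-tuple T) : bool :=
  [exists P : {set 'I_n}, swap_perm P && (apply_swaps P u == v)].

(* swap distance (only meaningful for matching u v; otherwise +oo and it is
   never used): the number of swaps in the (unique) swap permutation from u
   to v never swapping identical letters. *)
Definition dS (u v : n.-tuple T) : nat :=
  \big[minn/n]_(P : {set 'I_n} | [&& swap_perm P, no_identical P u & apply_swaps P u == v]) #|P|.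

(* swap+Hamming distance: min over t of dS(u,t) + Ham(t,v); terms with
   dS(u,t) = +oo (t not matching u) are omitted. The value is <= Ham(u,v) <= n,
   so the neutral element n of minn is harmless. *)
Definition dSH (u v : n.-tuple T) : nat :=
  \big[minn/n]_(t : n.-tuple T | matching u t) (dS u t + ham t v).

Definition lex_lt (u v : n.-tuple T) : bool :=
  [exists i : 'I_n, [forall j : 'I_n, (val j < val i) ==> (tnth u j == tnth v j)]
                    && (tnth u i < tnth v i)%O].

Definition swap_cond (t s : n.-tuple T) (i : nat) : bool :=
  [exists p : 'I_n, exists q : 'I_n,
     [&& val p == i, val q == i.+1, tnth t p != tnth t q,
         tnth t p == tnth s q & tnth t q == tnth s p]].

Fixpoint greedy_swap (t s : n.-tuple T) (i : nat) : bool :=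
  match i with
  | 0 => swap_cond t s 0
  | i'.+1 => swap_cond t s i'.+1 && ~~ greedy_swap t s i'
  end.

(* SW(S, t, i) for 0-based position i *)
Definition SW {k : nat} (S : 'I_k -> n.-tuple T) (t : n.-tuple T) (i : nat) : {set 'I_k} :=
  [set j : 'I_k | greedy_swap t (S j) i].

Definition costH {k : nat} (S : 'I_k -> n.-tuple T) (t : n.-tuple T) : nat :=
  \sum_(j < k) ham (S j) t.
Definition costSH {k : nat} (S : 'I_k -> n.-tuple T) (t : n.-tuple T) : nat :=
  \sum_(j < k) dSH (S j) t.

Definition lex_min_minimizer (cost : n.-tuple T -> nat) (t : n.-tuple T) : Prop :=
  (forall t', cost t <= cost t') /\
  (forall t', (forall t'', cost t' <= cost t'') -> ~~ lex_lt t' t).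

End StringDefs.

(** The greedy left-to-right choice of swaps is optimal for the swap+Hamming
    distance: a swap costs one and saves at most two mismatches, two only at a
    genuinely swappable pair, and the greedy scan takes at least as many
    swappable pairs as any swap set.  Hence [dSH s v] is the cost of the greedy
    swaps of [s] against [v].  If no greedy swap (for any [s_j]) touches
    position [i] of [sSH], these swaps stay available when the letter at [i] is
    rewritten, so replacing [sSH[i]] by [sH[i]] changes [costSH] by at most the
    change of the column mismatch count, while the converse replacement in [sH]
    changes [costH] by exactly the opposite amount.  Minimality of both makes
    both replacements cost-neutral, and lexicographic minimality of both then
    forces [sSH[i] = sH[i]]. *)
From mathcomp Require Import all_boot all_order.
From mathcomp Require Import zify.
Set Implicit Arguments. Unset Strict Implicit. Unset Printing Implicit Defensive.
Import Order.TTheory.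

Definition partner (Q : pred nat) x :=
  if Q x then x.+1 else if (0 < x) && Q x.-1 then x.-1 else x.

Definition fold_pairs (Q : pred nat) (F : nat -> nat) x :=
  if Q x then F x + F x.+1 else if (0 < x) && Q x.-1 then 0 else F x.

Section SwapSet.
Variables (n : nat) (Q : pred nat).
Hypothesis Q_lt : forall x, Q x -> x.+1 < n.
Hypothesis Q_sep : forall x, Q x -> ~~ Q x.+1.

Lemma sum_fold_pairs (F : nat -> nat) :
  \sum_(0 <= x < n) F x = \sum_(0 <= x < n) fold_pairs Q F x.
Proof.
suff H k : k <= n -> (k == 0) || ~~ Q k.-1 ->
    \sum_(0 <= x < k) F x = \sum_(0 <= x < k) fold_pairs Q F x.
  apply: H => //; case: n Q_lt => [|m] Qn //=.
  by apply/negP => /Qn; rewrite ltnn.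
elim/ltn_ind: k => -[|k] IH kn /= hk; first by rewrite !big_geq.
case: (boolP ((0 < k) && Q k.-1)) => [/andP[k0 Qk]|nQ].
- case: k k0 Qk IH kn hk => [|j] // _ /= Qj IH kn hk.
  rewrite !big_nat_recr //= {2 3}/fold_pairs (negbTE hk) Qj /=.
  rewrite IH //; last 2 first.
  + lia.
  + by case: j Qj {IH kn hk} => [|j] Qj //=; apply/negP => /Q_sep; rewrite Qj.
  by rewrite addnA addn0.
- rewrite big_nat_recr // [RHS]big_nat_recr //= {2}/fold_pairs (negbTE hk) (negbTE nQ).
  rewrite IH //; first lia.
  by case: k {IH kn hk} nQ => [|k] //=; rewrite lt0n.
Qed.

End SwapSet.

(* Exchange inequality for one swapped pair: swapping [a, a'] against [b, b']
   saves at most one mismatch, and two only when it is a genuine swap. *)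
Lemma mismatch_swap_le (U : eqType) (a a' b b' : U) :
  (a != b) + (a' != b') <= (a' != b) + (a != b') + 1 + [&& b != b', b == a' & b' == a].
Proof.
case: (eqVneq a b) => [->|hab]; case: (eqVneq a' b') => [->|ha'b'] //=;
  case: (eqVneq b' b) => [e|nb] /=; try lia;
  case: (eqVneq b a') => [e1|n1] /=; try lia;
  case: (eqVneq b' a) => [e2|n2] /=; try lia.
all: subst; rewrite ?eqxx ?(negbTE hab) ?(negbTE ha'b') //=; try lia.
all: try rewrite eq_sym in nb; try rewrite eq_sym in n1; try rewrite eq_sym in n2.
all: rewrite ?(negbTE nb) ?(negbTE n1) ?(negbTE n2) /=; try lia.
by rewrite eqxx in hab.
Qed.

Section Greedy.
Variables (U : eqType) (A B : nat -> U) (n : nat).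

(* [A] is the string whose letters get swapped, [B] the one it is compared to. *)
Definition swappable x := [&& x.+1 < n, B x != B x.+1, B x == A x.+1 & B x.+1 == A x].

Fixpoint greedy x := if x is k.+1 then swappable k.+1 && ~~ greedy k else swappable 0.

Definition swap_cost (Q : pred nat) :=
  \sum_(0 <= x < n) (Q x : nat) + \sum_(0 <= x < n) (A (partner Q x) != B x).

Lemma greedy_swappable x : greedy x -> swappable x.
Proof. by case: x => //= k /andP[]. Qed.

Lemma greedy_lt x : greedy x -> x.+1 < n.
Proof. by move/greedy_swappable/and4P=> []. Qed.

Lemma greedy_sep x : greedy x -> ~~ greedy x.+1.
Proof. by move=> h /=; rewrite h andbF. Qed.

Lemma eq_swap_cost (Q Q' : pred nat) : Q =1 Q' -> swap_cost Q = swap_cost Q'.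
Proof.
move=> eQ; rewrite /swap_cost /partner.
by congr (_ + _); apply: eq_bigr => x _; rewrite !eQ.
Qed.

Lemma mismatch_greedy :
  \sum_(0 <= x < n) (A x != B x) =
  \sum_(0 <= x < n) (A (partner greedy x) != B x) + \sum_(0 <= x < n) (greedy x : nat)
    + \sum_(0 <= x < n) (greedy x : nat).
Proof.
rewrite (sum_fold_pairs greedy_lt greedy_sep).
rewrite (sum_fold_pairs greedy_lt greedy_sep (fun x => A (partner greedy x) != B x)).
rewrite -!big_split; apply: eq_bigr => x _; rewrite /fold_pairs /partner.
case: (boolP (greedy x)) => g; last by case: ifP => /= _; lia.
have /and4P[_ neqB /eqP eBA /eqP eBA'] := greedy_swappable g.
rewrite (negbTE (greedy_sep g)) /= ?g eBA eBA' !eqxx.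
by rewrite eBA eBA' in neqB; rewrite neqB eq_sym neqB.
Qed.

Section AnySwapSet.
Variable Q : pred nat.
Hypothesis Q_lt : forall x, Q x -> x.+1 < n.
Hypothesis Q_sep : forall x, Q x -> ~~ Q x.+1.

Lemma mismatch_le_swaps :
  \sum_(0 <= x < n) (A x != B x) <=
  \sum_(0 <= x < n) (A (partner Q x) != B x) + \sum_(0 <= x < n) (Q x : nat)
    + \sum_(0 <= x < n) (Q x && swappable x : nat).
Proof.
rewrite (sum_fold_pairs Q_lt Q_sep) (sum_fold_pairs Q_lt Q_sep (fun x => A (partner Q x) != B x)).
rewrite -!big_split; apply: leq_sum => x _; rewrite /fold_pairs /partner.
case: (boolP (Q x)) => q; last by case: ifP => /= _; lia.
rewrite (negbTE (Q_sep q)) /= ?q /swappable Q_lt //=.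
exact: mismatch_swap_le.
Qed.

(* The extra term is a greedy swap at k-1 not matched by a swappable swap of [Q] there. *)
Lemma swappable_swaps_le_greedy :
  \sum_(0 <= x < n) (Q x && swappable x : nat) <= \sum_(0 <= x < n) (greedy x : nat).
Proof.
suff H k : \sum_(0 <= x < k) (Q x && swappable x : nat)
             + [&& 0 < k, greedy k.-1 & ~~ (Q k.-1 && swappable k.-1)]
           <= \sum_(0 <= x < k) (greedy x : nat).
  by apply: leq_trans (H n); rewrite leq_addr.
elim: k => [|k IH]; first by rewrite !big_geq.
rewrite !big_nat_recr //=.
case: (boolP (greedy k)) => g.
  by move: IH; case: (Q k && swappable k); case: [&& _, _ & _] => /=; lia.
case: (boolP (Q k && swappable k)) => /= qk.
  case: k IH g qk => [|k] IH g qk; first by move: g qk => /= /negbTE ->; rewrite andbF.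
  move: g => /=; case/andP: (qk) => Qk sk; rewrite sk /= negbK => gk.
  have nQ : ~~ (Q k && swappable k) by apply/negP => /andP[/Q_sep]; rewrite Qk.
  by move: IH; rewrite /= gk nQ /=; lia.
by move: IH; case: [&& _, _ & _] => /=; lia.
Qed.

Lemma greedy_swap_cost_min : swap_cost greedy <= swap_cost Q.
Proof.
have := mismatch_greedy; have := mismatch_le_swaps; have := swappable_swaps_le_greedy.
rewrite /swap_cost; lia.
Qed.

End AnySwapSet.
End Greedy.

Lemma leq_bigmin (I : finType) (P : pred I) (F : I -> nat) m x0 :
  m <= x0 -> (forall i, P i -> m <= F i) -> m <= \big[minn/x0]_(i | P i) F i.
Proof.
move=> mx0 mF; apply: (big_ind (fun x => m <= x)) => // x y mx my.
by rewrite leq_min mx my.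
Qed.

Lemma bigmin_leq (I : finType) (P : pred I) (F : I -> nat) x0 i0 :
  P i0 -> \big[minn/x0]_(i | P i) F i <= F i0.
Proof.
move=> Pi0; have : i0 \in index_enum I := mem_index_enum i0.
elim: (index_enum I) => [//|a r IH]; rewrite inE big_cons => /orP[/eqP <-|/IH le_r].
  by rewrite Pi0 geq_minl.
by case: (P a) => //; apply: leq_trans (geq_minr _ _) le_r.
Qed.

Section Strings.
Context {d : Order.disp_t} {T : finOrderType d} {n : nat}.
Implicit Types (u v s t w : n.-tuple T) (P : {set 'I_n}) (i : 'I_n) (c : T).

Lemma onth_tnth u (i : 'I_n) : onth u i = Some (tnth u i).
Proof. by rewrite onthE (nth_map (tnth u i)) ?size_tuple // -tnth_nth. Qed.

Definition in_nat P : pred nat := fun x => [exists p in P, val p == x].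

Lemma in_natE P (i : 'I_n) : in_nat P i = (i \in P).
Proof.
apply/existsP/idP => [[p /andP[pP /eqP/val_inj<-]]|iP] //.
by exists i; rewrite iP eqxx.
Qed.

Lemma swap_perm_lt P : swap_perm P -> forall x, in_nat P x -> x.+1 < n.
Proof.
move=> /andP[/forallP lt_n _] x /existsP[p /andP[pP /eqP<-]].
by have := lt_n p; rewrite pP.
Qed.

Lemma swap_perm_sep P : swap_perm P -> forall x, in_nat P x -> ~~ in_nat P x.+1.
Proof.
move=> /andP[_ /forallP far] x /existsP[p /andP[pP /eqP ep]].
apply/negP => /existsP[q /andP[qP /eqP eq]].
have := far p; rewrite pP /= => /forallP/(_ q); rewrite qP /=.
have -> : p != q by apply/eqP => e; move: ep eq; rewrite e; lia.
have ep' : nat_of_ord p = x := ep; have eq' : nat_of_ord q = x.+1 := eq.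
rewrite /=; lia.
Qed.

Lemma swap_partnerE P i : swap_perm P -> val (swap_partner P i) = partner (in_nat P) i.
Proof.
move=> sP; rewrite /swap_partner /partner in_natE.
case: pickP => [j /orP[/andP[iP /eqP ->]|/andP[jP /eqP ej]] | none] /=.
- by rewrite iP.
- have ej' : (nat_of_ord j).+1 = nat_of_ord i := ej.
  case iP: (i \in P).
    by have := swap_perm_sep sP (x := j); rewrite in_natE jP ej' in_natE iP => /(_ isT).
  by rewrite -ej' /= in_natE jP.
- case iP: (i \in P).
    have lt_n := swap_perm_lt sP (x := i); rewrite in_natE iP in lt_n.
    by have := none (Ordinal (lt_n isT)); rewrite iP eqxx.
  case: ifP => // /andP[i0 /existsP[p /andP[pP /eqP ep]]].
  by have := none p; rewrite pP iP /= ep prednK // eqxx.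
Qed.

Lemma hamE u v : ham u v = \sum_(i < n) (tnth u i != tnth v i).
Proof.
rewrite /ham -sum1_card big_mkcond; apply: eq_bigr => i _; rewrite inE.
by case: (_ != _).
Qed.

Lemma swap_costE P s v : swap_perm P ->
  #|P| + ham (apply_swaps P s) v = swap_cost (onth s) (onth v) n (in_nat P).
Proof.
move=> sP; rewrite /swap_cost; congr (_ + _).
  rewrite -sum1_card big_mkcond big_mkord; apply: eq_bigr => i _.
  by rewrite in_natE; case: (i \in P).
rewrite hamE big_mkord; apply: eq_bigr => i _.
by rewrite tnth_mktuple -swap_partnerE // !onth_tnth.
Qed.

Lemma swap_condE v s x : swap_cond v s x = swappable (onth s) (onth v) n x.
Proof.
apply/existsP/idP.
  move=> [p /existsP[q /and5P[/eqP ep /eqP eq neq e1 e2]]].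
  have ep' : nat_of_ord p = x := ep; have eq' : nat_of_ord q = x.+1 := eq.
  subst x; rewrite /swappable -eq' !onth_tnth ltn_ord /=.
  by rewrite !(inj_eq (@Some_inj _)) neq e1 e2.
case/and4P => lt_n neq e1 e2.
exists (Ordinal (ltnW lt_n)); apply/existsP; exists (Ordinal lt_n).
move: neq e1 e2; rewrite -[x]/(val (Ordinal (ltnW lt_n))) -[x.+1]/(val (Ordinal lt_n)).
by rewrite !onth_tnth !(inj_eq (@Some_inj _)) => -> -> ->; rewrite !eqxx.
Qed.

Lemma greedy_swapE v s x : greedy_swap v s x = greedy (onth s) (onth v) n x.
Proof. by elim: x => [|x IH] /=; rewrite swap_condE // IH. Qed.

Definition greedy_set v s := [set p : 'I_n | greedy_swap v s p].

Lemma in_nat_greedy_set v s : in_nat (greedy_set v s) =1 greedy (onth s) (onth v) n.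
Proof.
move=> x; apply/existsP/idP => [[p /andP[]]|gx].
  by rewrite inE greedy_swapE => g /eqP <-.
have x_lt : x < n by have := greedy_lt gx; lia.
by exists (Ordinal x_lt); rewrite inE greedy_swapE gx eqxx.
Qed.

Lemma swap_perm_greedy_set v s : swap_perm (greedy_set v s).
Proof.
apply/andP; split; apply/forallP => p; apply/implyP; rewrite inE greedy_swapE => g.
  exact: greedy_lt g.
apply/forallP => q; apply/implyP; rewrite inE greedy_swapE => g'; apply/implyP => pq.
have npq : nat_of_ord p != nat_of_ord q by [].
have q_next : nat_of_ord q != (nat_of_ord p).+1.
  by apply/eqP => e; move: g'; rewrite e (negbTE (greedy_sep g)).
have p_next : nat_of_ord p != (nat_of_ord q).+1.
  by apply/eqP => e; move: g; rewrite e (negbTE (greedy_sep g')).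
change (((nat_of_ord p).+1 < nat_of_ord q) || ((nat_of_ord q).+1 < nat_of_ord p)).
apply/orP; lia.
Qed.

Lemma no_identical_greedy_set v s : no_identical (greedy_set v s) s.
Proof.
apply/forallP => p; apply/implyP; rewrite inE greedy_swapE => g.
apply/forallP => q; apply/implyP => /eqP eq.
have eq' : nat_of_ord q = p.+1 := eq.
move: (greedy_swappable g); rewrite /swappable -eq' !onth_tnth /=.
case/and4P => _ neq /eqP e1 /eqP e2; apply/eqP => e.
by move: neq; rewrite e1 e2 e eqxx.
Qed.

Definition greedy_cost v s := #|greedy_set v s| + ham (apply_swaps (greedy_set v s) s) v.

Lemma greedy_cost_le v s P : swap_perm P -> greedy_cost v s <= #|P| + ham (apply_swaps P s) v.
Proof.
move=> sP; rewrite /greedy_cost !swap_costE ?swap_perm_greedy_set //.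
rewrite (eq_swap_cost _ _ _ (in_nat_greedy_set v s)).
by apply: greedy_swap_cost_min; [exact: swap_perm_lt | exact: swap_perm_sep].
Qed.

Lemma ham_le u v : ham u v <= n.
Proof. by rewrite /ham; apply: leq_trans (max_card _) _; rewrite card_ord. Qed.

Lemma dSH_le_swaps P s w : swap_perm P -> no_identical P s ->
  dSH s w <= #|P| + ham (apply_swaps P s) w.
Proof.
move=> sP niP; apply: leq_trans (@bigmin_leq _ _ _ _ (apply_swaps P s) _) _.
  by apply/existsP; exists P; rewrite sP eqxx.
by rewrite leq_add2r; apply: bigmin_leq; rewrite sP niP eqxx.
Qed.

Lemma dSH_greedyE v s : dSH s v = greedy_cost v s.
Proof.
apply/eqP; rewrite eqn_leq dSH_le_swaps ?swap_perm_greedy_set ?no_identical_greedy_set //=.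
have cost_le_n : greedy_cost v s <= n.
  apply: leq_trans (greedy_cost_le v s (P := set0) _) _.
    by apply/andP; split; apply/forallP => p; rewrite inE.
  by rewrite cards0 add0n ham_le.
apply: leq_bigmin => // t _; apply: (big_ind (fun x => greedy_cost v s <= x + ham t v)).
- exact: leq_trans cost_le_n (leq_addr _ _).
- by move=> x y hx hy; rewrite addn_minl leq_min hx hy.
- by move=> P /and3P[sP _ /eqP <-]; apply: greedy_cost_le.
Qed.

Definition tuple_set u (i : 'I_n) (c : T) : n.-tuple T :=
  [tuple if j == i then c else tnth u j | j < n].

Lemma ham_tuple_set w u i c :
  ham w (tuple_set u i c) + (tnth w i != tnth u i) = ham w u + (tnth w i != c).
Proof.
rewrite !hamE (bigD1 i) //= [in RHS](bigD1 i) //= tnth_mktuple eqxx.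
under eq_bigr => j ji do rewrite tnth_mktuple (negbTE ji).
lia.
Qed.

Lemma lex_lt_tuple_set u i c : (c < tnth u i)%O -> lex_lt (tuple_set u i c) u.
Proof.
move=> lt_c; apply/existsP; exists i; rewrite tnth_mktuple eqxx lt_c andbT.
apply/forallP => j; apply/implyP => ji; rewrite tnth_mktuple.
by rewrite (_ : (j == i) = false) //; apply/eqP => e; rewrite e ltnn in ji.
Qed.

Lemma lex_min_minimizer_le (cost : n.-tuple T -> nat) t i c :
  lex_min_minimizer cost t -> cost (tuple_set t i c) <= cost t -> (tnth t i <= c)%O.
Proof.
case=> tmin tlex le_cost; rewrite leNgt; apply/negP => /lex_lt_tuple_set lt_t.
by have /negP := tlex _ (fun t'' => leq_trans le_cost (tmin t'')).
Qed.

(* Rewriting a letter outside every greedy swap of [s] keeps those swaps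
   available, so only the Hamming part of [dSH] changes. *)
Lemma dSH_tuple_set v s i c :
  ~~ greedy_swap v s i -> (0 < i -> ~~ greedy_swap v s i.-1) ->
  dSH s (tuple_set v i c) + (tnth s i != tnth v i) <= dSH s v + (tnth s i != c).
Proof.
move=> gi gi1.
have fixed_i : tnth (apply_swaps (greedy_set v s) s) i = tnth s i.
  rewrite tnth_mktuple; congr (tnth s _); apply: val_inj.
  rewrite swap_partnerE ?swap_perm_greedy_set // /partner !in_nat_greedy_set.
  rewrite -!greedy_swapE (negbTE gi).
  by case: (boolP (0 < i)) => // /gi1 /negbTE ->.
have := dSH_le_swaps (tuple_set v i c) (swap_perm_greedy_set v s) (no_identical_greedy_set v s).
rewrite -(leq_add2r (tnth s i != tnth v i)) => /leq_trans; apply.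
by rewrite dSH_greedyE /greedy_cost -addnA -fixed_i ham_tuple_set addnA fixed_i.
Qed.

Definition column_mismatch k (S : 'I_k -> n.-tuple T) (i : 'I_n) (x : T) : nat :=
  \sum_(j < k) (tnth (S j) i != x).

Lemma costH_tuple_set k (S : 'I_k -> n.-tuple T) t i c :
  costH S (tuple_set t i c) + column_mismatch S i (tnth t i)
  = costH S t + column_mismatch S i c.
Proof. by rewrite /costH -!big_split; apply: eq_bigr => j _; apply: ham_tuple_set. Qed.

Lemma costSH_tuple_set k (S : 'I_k -> n.-tuple T) t i c :
  SW S t i = set0 -> (0 < i -> SW S t i.-1 = set0) ->
  costSH S (tuple_set t i c) + column_mismatch S i (tnth t i)
  <= costSH S t + column_mismatch S i c.
Proof.
move=> SWi SWprev; rewrite /costSH -!big_split; apply: leq_sum => j _.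
apply: dSH_tuple_set => [|i0]; apply/negP => g.
  by have := in_set0 j; rewrite -SWi inE g.
by have := in_set0 j; rewrite -(SWprev i0) inE g.
Qed.

End Strings.

Theorem mainTheorem13 (d : Order.disp_t) (T : finOrderType d) (n k : nat)
  (S : 'I_k -> n.-tuple T) (sH sSH : n.-tuple T) :
  lex_min_minimizer (costH S) sH ->
  lex_min_minimizer (costSH S) sSH ->
  forall i : 'I_n, tnth sSH i != tnth sH i ->
    ((0 < val i) && (SW S sSH (val i).-1 != set0)) || (SW S sSH (val i) != set0).
Proof.
move=> sHmin sSHmin i; apply: contraR; rewrite negb_or negb_and !negbK.
case/andP => SWprev /eqP SWi.
have {}SWprev : 0 < i -> SW S sSH i.-1 = set0.
  by move=> i0; move: SWprev; rewrite i0 /= => /eqP.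
have eqH := costH_tuple_set S sH i (tnth sSH i).
have leSH := costSH_tuple_set (tnth sH i) SWi SWprev.
have geH := sHmin.1 (tuple_set sH i (tnth sSH i)).
have geSH := sSHmin.1 (tuple_set sSH i (tnth sH i)).
have le_H : (tnth sH i <= tnth sSH i)%O by apply: lex_min_minimizer_le sHmin _; lia.
have le_SH : (tnth sSH i <= tnth sH i)%O by apply: lex_min_minimizer_le sSHmin _; lia.
by rewrite eq_le le_H le_SH.
Qed.
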